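(* Let $S\subset\mathbb{R}^d$ be a nonempty compact convex set with diameter $D:=\sup_{x,y\in S}\|x-y\|$, and let $f$ be differentiable on $S$ with $L$-Lipschitz gradient on $S$. Let $G:=\sup_{x\in S}\|\nabla f(x)\|<\infty$ and fix a constant $C\ge\max\{LD^2,\,GD\}$ (with $C>0$). Let $\delta\ge 0$, and suppose that for every $x\in S$ a vector $g_\delta(x)\in\mathbb{R}^d$ is available with \[ \big|\langle \nabla f(x)-g_\delta(x),\,s-x\rangle\big|\le\delta\quad\text{for all } s\in S. \] Given $x^0\in S$, define iterates for $k=0,1,2,\dots$ by choosing $s^k\in\arg\min_{s\in S}\langle g_\delta(x^k),\,s-x^k\rangle$, setting $\tilde g_k:=\langle g_\delta(x^k),\,x^k-s^k\rangle$, $\overline\alpha_k:=(\tilde g_k-\delta)_+/C$ where $(u)_+:=\max\{u,0\}$, and $x^{k+1}:=x^k+\overline\alpha_k(s^k-x^k)$. Then for every $k\ge 0$, \[ f(x^{k+1})\le f(x^k)-\frac{(\tilde g_k-\delta)_+^2}{2C}. \]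
   Context: $\|\cdot\|$ is the Euclidean norm and $\langle\cdot,\cdot\rangle$ the Euclidean inner product. $f$ need not be convex. *)

From HB Require Import structures.
From mathcomp Require Import all_boot all_order all_algebra.
From mathcomp Require Import all_classical all_reals all_analysis.
Set Implicit Arguments. Unset Strict Implicit. Unset Printing Implicit Defensive.
Import Order.TTheory GRing.Theory Num.Theory.
Import numFieldNormedType.Exports.
Local Open Scope classical_set_scope.
Local Open Scope ring_scope.

Section Defs.
Variables (R : realType) (d : nat).

Definition dotp (u v : 'rV[R]_d) : R := \sum_(i < d) u ord0 i * v ord0 i.
Definition enorm (u : 'rV[R]_d) : R := Num.sqrt (dotp u u).

Definition convexS (S : set 'rV[R]_d) : Prop :=
  forall x y (t : R), S x -> S y -> 0 <= t -> t <= 1 -> S (x + t *: (y - x)).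

Definition gradient (f : 'rV[R]_d -> R) (x : 'rV[R]_d) : 'rV[R]_d :=
  \row_(i < d) ('d f x : 'rV[R]_d -> R) (delta_mx ord0 i).

Definition diam (S : set 'rV[R]_d) : R :=
  sup [set r | exists x y, S x /\ S y /\ r = enorm (x - y)].

Definition gradsup (f : 'rV[R]_d -> R) (S : set 'rV[R]_d) : R :=
  sup [set r | exists x, S x /\ r = enorm (gradient f x)].

Definition pos_part (u : R) : R := Num.max u 0.

End Defs.

(** Along the segment from [x] to [y], the function
   [h t := f (x + t (y - x)) - t <grad f x, y - x> - t^2 L |y - x|^2 / 2]
   has nonpositive derivative by the Lipschitz bound on the gradient, so
   [h 1 <= h 0] (descent lemma).  For the step [alpha = (g - delta)_+ / C], the
   oracle error makes the linear term at most
   [- alpha (g - delta)_+ = - (g - delta)_+^2 / C], while [L |s - x|^2 <= L D^2 <= C]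
   bounds the quadratic term by half of that.  The bound
   [(g - delta)_+ <= G D <= C] keeps [alpha <= 1], hence the iterates in [S]. *)

From HB Require Import structures.
From mathcomp Require Import all_boot all_order all_algebra.
From mathcomp Require Import all_classical all_reals all_analysis.
From mathcomp Require Import ring lra.
Import Order.TTheory GRing.Theory Num.Theory.
Import numFieldNormedType.Exports.
Local Open Scope classical_set_scope.
Local Open Scope ring_scope.
Set Implicit Arguments. Unset Strict Implicit.

Section InnerProduct.
Variables (R : realType) (d : nat).
Implicit Types u v w : 'rV[R]_d.

Lemma dotpC u v : dotp u v = dotp v u.
Proof. by apply: eq_bigr => i _; rewrite mulrC. Qed.

Lemma dotpDl u v w : dotp (u + v) w = dotp u w + dotp v w.
Proof. by rewrite /dotp -big_split; apply: eq_bigr => i _; rewrite mxE mulrDl. Qed.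

Lemma dotpZl (t : R) u w : dotp (t *: u) w = t * dotp u w.
Proof. by rewrite /dotp mulr_sumr; apply: eq_bigr => i _; rewrite mxE mulrA. Qed.

Lemma dotpNl u w : dotp (- u) w = - dotp u w.
Proof. by rewrite -scaleN1r dotpZl mulN1r. Qed.

Lemma dotpBl u v w : dotp (u - v) w = dotp u w - dotp v w.
Proof. by rewrite dotpDl dotpNl. Qed.

Lemma dotpDr u v w : dotp w (u + v) = dotp w u + dotp w v.
Proof. by rewrite !(dotpC w) dotpDl. Qed.

Lemma dotpZr (t : R) u w : dotp w (t *: u) = t * dotp w u.
Proof. by rewrite !(dotpC w) dotpZl. Qed.

Lemma dotpNr u w : dotp w (- u) = - dotp w u.
Proof. by rewrite !(dotpC w) dotpNl. Qed.

Lemma dotpBr u v w : dotp w (u - v) = dotp w u - dotp w v.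
Proof. by rewrite !(dotpC w) dotpBl. Qed.

Lemma dotp0l u : dotp 0 u = 0.
Proof. by rewrite /dotp big1 // => i _; rewrite mxE mul0r. Qed.

Lemma dotp0r u : dotp u 0 = 0.
Proof. by rewrite dotpC dotp0l. Qed.

Lemma dotpp_ge0 u : 0 <= dotp u u.
Proof. by apply: sumr_ge0 => i _; rewrite -expr2 sqr_ge0. Qed.

Lemma dotpp_eq0 u : (dotp u u == 0) = (u == 0).
Proof.
apply/idP/eqP => [|->]; last by rewrite dotp0l.
rewrite psumr_eq0 => [/allP u0|i _]; last by rewrite -expr2 sqr_ge0.
apply/rowP => i; rewrite mxE.
by have /= := u0 i (mem_index_enum _); rewrite mulf_eq0 orbb => /eqP.
Qed.

Lemma enorm_ge0 u : 0 <= enorm u.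
Proof. exact: sqrtr_ge0. Qed.

Lemma enorm_sqr u : enorm u ^+ 2 = dotp u u.
Proof. by rewrite sqr_sqrtr // dotpp_ge0. Qed.

Lemma enorm_eq0 u : (enorm u == 0) = (u == 0).
Proof. by rewrite -dotpp_eq0 -enorm_sqr sqrf_eq0. Qed.

Lemma enormZ (t : R) u : enorm (t *: u) = `|t| * enorm u.
Proof.
by rewrite /enorm dotpZl dotpZr mulrA -expr2 sqrtrM ?sqr_ge0 // sqrtr_sqr.
Qed.

Lemma enormN u : enorm (- u) = enorm u.
Proof. by rewrite -scaleN1r enormZ normrN normr1 mul1r. Qed.

Lemma enorm_le (M : R) u : 0 <= M -> dotp u u <= M ^+ 2 -> enorm u <= M.
Proof.
move=> M0 uM; rewrite -(ger0_norm M0) -sqrtr_sqr.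
by rewrite ler_sqrt // sqr_ge0.
Qed.

Lemma cauchy_schwarz u v : dotp u v <= enorm u * enorm v.
Proof.
set a := enorm u; set b := enorm v.
have a0 : 0 <= a := enorm_ge0 u; have b0 : 0 <= b := enorm_ge0 v.
have [ab0|] := ltrP 0 (a * b).
  (* expand [0 <= |b u - a v|^2 = 2 a b (a b - <u, v>)] *)
  have := dotpp_ge0 (b *: u - a *: v).
  rewrite !(dotpBl, dotpBr, dotpZl, dotpZr) -!enorm_sqr (dotpC v u) -/a -/b.
  move=> sq0; have : 0 <= (a * b) * (2 * (a * b - dotp u v)) by nra.
  by rewrite pmulr_rge0 //; lra.
rewrite le_eqVlt ltNge mulr_ge0 // orbF mulf_eq0 !enorm_eq0.
by case/orP=> /eqP->; rewrite ?dotp0l ?dotp0r mulr_ge0.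
Qed.

Lemma enormD u v : enorm (u + v) <= enorm u + enorm v.
Proof.
apply: enorm_le; first by rewrite addr_ge0 // enorm_ge0.
rewrite !(dotpDl, dotpDr) -!enorm_sqr (dotpC v u).
by have := cauchy_schwarz u v; nra.
Qed.

Lemma enorm_le_mx_norm u : enorm u <= d%:R * `|u|.
Proof.
apply: enorm_le; first by rewrite mulr_ge0.
apply: (@le_trans _ _ (\sum_(i < d) `|u| ^+ 2)).
  apply: ler_sum => i _; rewrite -expr2 -real_normK ?num_real //.
  rewrite lerXn2r ?nnegrE // [X in _ <= X]/Num.norm /= mx_normrE.
  exact: le_trans (le_bigmax _ _ (ord0, i)).
rewrite sumr_const card_ord exprMn -[_ *+ d]mulr_natl ler_wpM2r ?sqr_ge0 //.
by rewrite -natrX ler_nat; case: (d) => // n; rewrite expnS leq_pmulr.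
Qed.

End InnerProduct.

Section Bounds.
Variables (R : realType) (d : nat) (S : set 'rV[R]_d).
Hypothesis S_compact : compact S.

Lemma compact_enorm_bounded : exists B, forall x, S x -> enorm x <= B.
Proof.
have [M [_ SM]] := compact_bounded S_compact.
exists (d%:R * (`|M| + 1)) => x Sx.
apply: le_trans (enorm_le_mx_norm x) _; rewrite ler_wpM2l // SM //.
by rewrite (le_lt_trans (ler_norm M)) // ltrDl.
Qed.

Lemma enorm_le_diam x y : S x -> S y -> enorm (x - y) <= diam S.
Proof.
move=> Sx Sy; have [B SB] := compact_enorm_bounded.
apply: ub_le_sup; last by exists x, y.
exists (B + B) => _ [u [v [Su [Sv ->]]]].
by apply: le_trans (enormD _ _) _; rewrite enormN lerD ?SB.
Qed.

Lemma diam_ge0 x : S x -> 0 <= diam S.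
Proof. by move=> Sx; apply: le_trans (enorm_le_diam Sx Sx); apply: enorm_ge0. Qed.

Definition lipschitz_gradient (f : 'rV[R]_d -> R) (L : R) :=
  forall y z, S y -> S z -> enorm (gradient f y - gradient f z) <= L * enorm (y - z).

Lemma enorm_gradient_le_gradsup f L z :
  lipschitz_gradient f L -> S z -> enorm (gradient f z) <= gradsup f S.
Proof.
move=> f_lip Sz; apply: ub_le_sup; last by exists z.
exists (enorm (gradient f z) + `|L| * diam S) => _ [y [Sy ->]].
rewrite -[gradient f y](subrK (gradient f z)) addrC.
apply: le_trans (enormD _ _) _; rewrite lerD2l.
apply: le_trans (f_lip _ _ Sy Sz) _; apply: le_trans (ler_norm _) _.
by rewrite normrM (ger0_norm (enorm_ge0 _)) ler_wpM2l // enorm_le_diam.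
Qed.

End Bounds.

Section Descent.
Variables (R : realType) (d : nat).
Implicit Types (f : 'rV[R]_d -> R) (x v : 'rV[R]_d).

Lemma diff_gradient f x v : 'd f x v = dotp (gradient f x) v.
Proof.
rewrite {1}(row_sum_delta v) linear_sum /dotp; apply: eq_bigr => i _.
by rewrite linearZ /= mxE mulrC.
Qed.

Lemma is_derive_line f x v (t : R) :
  differentiable f (x + t *: v) ->
  is_derive t 1 (fun t => f (x + t *: v)) (dotp (gradient f (x + t *: v)) v).
Proof.
move=> df.
have dc : differentiable (f \o (fun t : R => x + t *: v)) t.
  exact: differentiable_comp.
apply: DeriveDef; first exact: diff_derivable.
rewrite deriveE // diff_comp //= -diff_gradient; congr ('d f _ _).
have -> : (fun t : R => x + t *: v) = cst x + (fun t : R => t *: v) by [].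
have := is_diffD (is_diff_cst x t) (is_diff_scalel t v).
by move=> ?; rewrite diff_val /= add0r scale1r.
Qed.

Lemma descent_lemma (S : set 'rV[R]_d) f (L : R) x v :
  convexS S -> (forall z, S z -> differentiable f z) ->
  lipschitz_gradient S f L -> S x -> S (x + v) ->
  f (x + v) <= f x + dotp (gradient f x) v + L / 2 * enorm v ^+ 2.
Proof.
move=> S_convex f_diff f_lip Sx Sxv.
set a := dotp (gradient f x) v; set c := L / 2 * enorm v ^+ 2.
have S_seg (t : R) : 0 <= t -> t <= 1 -> S (x + t *: v).
  by move=> t0 t1; have := S_convex _ _ _ Sx Sxv t0 t1; rewrite [x + v]addrC addrK.
pose h := (fun t => f (x + t *: v)) - a \*: (@id R) - c \*: (@id R * @id R).
pose dh t := dotp (gradient f (x + t *: v)) v - a * 1 - c * (t * 1 + t * 1).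
have h_derive (t : R) : 0 <= t -> t <= 1 -> is_derive t 1 h (dh t).
  move=> t0 t1; have := is_derive_line (f_diff _ (S_seg t t0 t1)).
  move/is_deriveB/(_ (is_deriveZ a (is_derive_id t 1))).
  by move/is_deriveB; apply; apply/is_deriveZ/is_deriveM.
have [k k01 hk] : exists2 k : R, k \in `]0, 1[%R & h 1 - h 0 = dh k * (1 - 0).
  apply: MVT => // [t /[!in_itv] /andP[t0 t1]|].
    by apply: h_derive; apply: ltW.
  apply: continuous_in_subspaceT => t; rewrite inE /= in_itv /= => /andP[t0 t1].
  have := @ex_derive _ _ _ _ _ _ _ (h_derive t t0 t1).
  by move/derivable1_diffP/differentiable_continuous.
have [k0 k1] : 0 < k /\ k < 1 by move: k01; rewrite in_itv => /andP[].
have dhk : dh k = dotp (gradient f (x + k *: v) - gradient f x) v - k * (L * enorm v ^+ 2).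
  have quad_id (p q e : R) : p - q * 1 - L / 2 * e * (k * 1 + k * 1) = p - q - k * (L * e).
    by field.
  by rewrite /dh /c /a dotpBl quad_id.
have dh_le0 : dh k <= 0.
  rewrite dhk subr_le0; apply: le_trans (cauchy_schwarz _ _) _.
  have := f_lip _ _ (S_seg k (ltW k0) (ltW k1)) Sx.
  rewrite [in X in _ <= X]addrC addKr enormZ (ger0_norm (ltW k0)).
  move/(ler_wpM2r (enorm_ge0 v)) => lip; apply: le_trans lip _.
  by rewrite expr2 !mulrA [L * k]mulrC lexx.
have h1 : h 1 = f (x + v) - a - c.
  by change (f (x + 1 *: v) - a * 1 - c * (1 * 1) = f (x + v) - a - c); rewrite scale1r !mulr1.
have h0 : h 0 = f x.
  by change (f (x + 0 *: v) - a * 0 - c * (0 * 0) = f x); rewrite scale0r addr0 !mulr0 !subr0.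
by move: hk dh_le0; rewrite h1 h0 subr0 mulr1 => <-; lra.
Qed.

End Descent.

Lemma pos_part_ge0 (R : realType) (u : R) : 0 <= pos_part u.
Proof. by rewrite le_max lexx orbT. Qed.

Lemma pos_part_le (R : realType) (u C : R) : u <= C -> 0 <= C -> pos_part u <= C.
Proof. by rewrite /pos_part ge_max => -> ->. Qed.

Lemma pos_partM (R : realType) (u : R) : pos_part u * u = pos_part u ^+ 2.
Proof. by rewrite /pos_part; case: leP => u0; rewrite ?expr2 ?mul0r ?expr0n. Qed.

Lemma pos_part_step_bound (R : realType) (u p L E C : R) :
  0 < C -> p <= - u -> L * E ^+ 2 <= C ->
  pos_part u / C * p + L / 2 * (pos_part u / C * E) ^+ 2 <= - (pos_part u ^+ 2 / (2 * C)).
Proof.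
move=> C0 pu LE; set a := pos_part u; set al := a / C.
have al0 : 0 <= al by rewrite divr_ge0 ?pos_part_ge0 ?(ltW C0).
have lin : al * p <= - (a ^+ 2 / C).
  by rewrite -pos_partM; apply: le_trans (ler_wpM2l al0 pu) _; rewrite /al mulrN mulrAC.
have quad : L / 2 * (al * E) ^+ 2 <= a ^+ 2 / (2 * C).
  have -> : L / 2 * (al * E) ^+ 2 = al ^+ 2 / 2 * (L * E ^+ 2) by rewrite exprMn; field.
  have -> : a ^+ 2 / (2 * C) = al ^+ 2 / 2 * C by rewrite /al; field; rewrite gt_eqF.
  by rewrite ler_wpM2l ?divr_ge0 ?sqr_ge0.
have -> : - (a ^+ 2 / (2 * C)) = - (a ^+ 2 / C) + a ^+ 2 / (2 * C).
  by field; rewrite gt_eqF.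
exact: lerD.
Qed.

Section FrankWolfeStep.
Variables (R : realType) (d : nat) (S : set 'rV[R]_d) (f : 'rV[R]_d -> R).
Variables (L C delta : R).
Hypotheses (S_nonempty : S !=set0) (S_compact : compact S) (S_convex : convexS S).
Hypotheses (f_diff : forall z, S z -> differentiable f z)
  (f_lip : lipschitz_gradient S f L).
Hypotheses (C_gt0 : 0 < C) (LD2_le : L * diam S ^+ 2 <= C)
  (GD_le : gradsup f S * diam S <= C).

Lemma frank_wolfe_step xk sk gk : S xk -> S sk ->
  dotp (gradient f xk - gk) (sk - xk) <= delta ->
  S (xk + pos_part (dotp gk (xk - sk) - delta) / C *: (sk - xk)) /\
  f (xk + pos_part (dotp gk (xk - sk) - delta) / C *: (sk - xk)) <=
    f xk - pos_part (dotp gk (xk - sk) - delta) ^+ 2 / (2 * C).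
Proof.
move=> Sxk Ssk err_le; set u := dotp gk (xk - sk) - delta.
have slope_le : dotp (gradient f xk) (sk - xk) <= - u.
  by rewrite /u opprB -(opprB sk xk) dotpNr opprK -lerBlDr -dotpBl.
have Nslope_le : - dotp (gradient f xk) (sk - xk) <= C.
  rewrite -dotpNr opprB; apply: le_trans (cauchy_schwarz _ _) (le_trans _ GD_le).
  apply: ler_pM; rewrite ?enorm_ge0 ?enorm_le_diam //.
  exact: enorm_gradient_le_gradsup f_lip Sxk.
have step_ge0 : 0 <= pos_part u / C by rewrite divr_ge0 ?pos_part_ge0 ?(ltW C_gt0).
have step_le1 : pos_part u / C <= 1.
  rewrite ler_pdivrMr // mul1r pos_part_le ?(ltW C_gt0) //.
  by apply: le_trans Nslope_le; rewrite lerNr.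
have S_next := S_convex Sxk Ssk step_ge0 step_le1.
split => //.
have LE2_le : L * enorm (sk - xk) ^+ 2 <= C.
  have [L0|L0] := leP 0 L; last by apply: le_trans (ltW C_gt0); rewrite nmulr_rle0 ?sqr_ge0.
  apply: le_trans LD2_le; rewrite ler_wpM2l // lerXn2r ?nnegrE ?enorm_ge0 ?enorm_le_diam //.
  by case: S_nonempty => z; apply: diam_ge0.
have := descent_lemma S_convex f_diff f_lip Sxk S_next.
rewrite dotpZr enormZ (ger0_norm step_ge0) => descent.
by apply: le_trans descent _; rewrite -addrA lerD2l pos_part_step_bound.
Qed.

End FrankWolfeStep.

Theorem lemma2 (R : realType) (d : nat) (S : set 'rV[R]_d)
  (f : 'rV[R]_d -> R) (L C delta : R) (g : 'rV[R]_d -> 'rV[R]_d)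
  (x s : nat -> 'rV[R]_d) :
  S !=set0 -> compact S -> convexS S ->
  (forall z, S z -> differentiable f z) ->
  (forall y z, S y -> S z ->
     enorm (gradient f y - gradient f z) <= L * enorm (y - z)) ->
  0 < C -> L * diam S ^+ 2 <= C -> gradsup f S * diam S <= C ->
  0 <= delta ->
  (forall z, S z -> forall w, S w ->
     `| dotp (gradient f z - g z) (w - z) | <= delta) ->
  S (x 0%N) ->
  (forall k, S (s k) /\
     forall w, S w -> dotp (g (x k)) (s k - x k) <= dotp (g (x k)) (w - x k)) ->
  (forall k, x k.+1 = x k +
     (pos_part (dotp (g (x k)) (x k - s k) - delta) / C) *: (s k - x k)) ->
  forall k, f (x k.+1) <=
     f (x k) - pos_part (dotp (g (x k)) (x k - s k) - delta) ^+ 2 / (2 * C).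
Proof.
move=> S0 S_cpt S_cvx f_diff f_lip C0 LD GD _ g_err Sx0 s_in x_next.
have step k : S (x k) -> S (x k.+1) /\ f (x k.+1) <=
    f (x k) - pos_part (dotp (g (x k)) (x k - s k) - delta) ^+ 2 / (2 * C).
  move=> Sxk; have [Ssk _] := s_in k; rewrite x_next.
  apply: (frank_wolfe_step S0 S_cpt S_cvx f_diff f_lip C0 LD GD Sxk Ssk).
  by have := g_err _ Sxk _ Ssk; rewrite ler_norml => /andP[].
have Sx k : S (x k) by elim: k => // k /step[].
by move=> k; case: (step k (Sx k)).
Qed.
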